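(* Let $a,b,c,p\in\mathbb{C}$ with $-c\notin\mathbb{N}\cup\{0\}$. Suppose that \[ \sinh(pz)F(a,b;c;z)=\sum_{n=0}^\infty\frac{u_n-v_n}{2}z^n,\qquad |z|<1, \] where $u_n,v_n$ are given as follows: $u_0=1$, $u_1=\frac{ab}{c}+p$, $u_2=\frac{a(1+a)b(1+b)}{2c(1+c)}+\frac{abp}{c}+\frac{p^2}{2}$, $v_0=1$, $v_1=\frac{ab}{c}-p$, $v_2=\frac{a(1+a)b(1+b)}{2c(1+c)}-\frac{abp}{c}+\frac{p^2}{2}$, and for all integers $n\ge2$, \[ u_{n+1}=\frac{(a+n)(b+n)+p(c+2n)}{(n+1)(c+n)}u_n-\frac{p(a+b+2n+p-1)}{(n+1)(c+n)}u_{n-1}+\frac{p^2}{(n+1)(c+n)}u_{n-2}, \] \[ v_{n+1}=\frac{(a+n)(b+n)-p(c+2n)}{(n+1)(c+n)}v_n+\frac{p(a+b+2n-p-1)}{(n+1)(c+n)}v_{n-1}+\frac{p^2}{(n+1)(c+n)}v_{n-2}. \] That is: with $(u_n)$ and $(v_n)$ defined by these initial values and recurrences, the displayed expansion holds.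
   Context: For $a\in\mathbb{C}$, $(a)_n=a(a+1)\cdots(a+n-1)$ denotes the Pochhammer symbol, with $(a)_0=1$. For $a,b,c\in\mathbb{C}$ with $-c\notin\mathbb{N}\cup\{0\}$, the Gaussian hypergeometric function is $F(a,b;c;z)=\sum_{n=0}^\infty \frac{(a)_n(b)_n}{(c)_n\,n!}z^n$, $|z|<1$. *)

From HB Require Import structures.
From mathcomp Require Import all_boot all_order all_algebra.
From mathcomp Require Import complex.
From mathcomp Require Import all_classical all_reals all_analysis.
Set Implicit Arguments. Unset Strict Implicit. Unset Printing Implicit Defensive.
Import GRing.Theory Num.Theory.
Import numFieldTopology.Exports numFieldNormedType.Exports.
Local Open Scope ring_scope.
Local Open Scope classical_set_scope.

(* Metric / normed structure on R[i] given by the complex modulus. *)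
HB.instance Definition _ (R : rcfType) := PseudoPointedMetric.copy R[i] (R[i])^o.
HB.instance Definition _ (R : rcfType) := NormedModule.copy R[i] (R[i])^o.

Section Defs.
Variable R : realType.
Local Notation C := R[i].

Definition poch (a : C) (n : nat) : C := \prod_(k < n) (a + k%:R).

Definition hyp_coef (a b c : C) (n : nat) : C :=
  poch a n * poch b n / (poch c n * (n`!)%:R).

Definition hypF (a b c z : C) : C :=
  lim (series (fun n => hyp_coef a b c n * z ^+ n) @ \oo).

Definition cexp (w : C) : C :=
  lim (series (fun n => w ^+ n / (n`!)%:R) @ \oo).
Definition csinh (w : C) : C := (cexp w - cexp (- w)) / 2.

Fixpoint useq (a b c p : C) (n : nat) {struct n} : C :=
  match n with
  | 0 => 1
  | 1 => a * b / c + p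
  | 2 => a * (1 + a) * b * (1 + b) / (2 * c * (1 + c)) + a * b * p / c + p ^+ 2 / 2
  | S ((S (S m as m1)) as m2) =>
      let N : C := m.+2%:R in
      let D := (N + 1) * (c + N) in
      ((a + N) * (b + N) + p * (c + 2 * N)) / D * useq a b c p m2
      - p * (a + b + 2 * N + p - 1) / D * useq a b c p m1
      + p ^+ 2 / D * useq a b c p m
  end.

Fixpoint vseq (a b c p : C) (n : nat) {struct n} : C :=
  match n with
  | 0 => 1
  | 1 => a * b / c - p
  | 2 => a * (1 + a) * b * (1 + b) / (2 * c * (1 + c)) - a * b * p / c + p ^+ 2 / 2
  | S ((S (S m as m1)) as m2) =>
      let N : C := m.+2%:R in
      let D := (N + 1) * (c + N) in
      ((a + N) * (b + N) - p * (c + 2 * N)) / D * vseq a b c p m2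
      + p * (a + b + 2 * N - p - 1) / D * vseq a b c p m1
      + p ^+ 2 / D * vseq a b c p m
  end.

End Defs.

From HB Require Import structures.
From mathcomp Require Import all_boot all_order all_algebra.
From mathcomp Require Import complex.
From mathcomp Require Import all_classical all_reals all_analysis.
From mathcomp Require Import ring lra.
Set Implicit Arguments. Unset Strict Implicit. Unset Printing Implicit Defensive.
Import Order.TTheory GRing.Theory Num.Theory.
Import numFieldTopology.Exports numFieldNormedType.Exports.
Import Normc.
Local Open Scope classical_set_scope.
Local Open Scope complex_scope.
Local Open Scope ring_scope.

(* With theta = z d/dz, F = F(a,b;c;.) solves theta (theta + c - 1) F =
   z (theta + a) (theta + b) F, and multiplying by e^(qz) turns theta into
   theta - qz.  Reading off coefficients, the Cauchy product of e^(qz) and F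
   satisfies the three-term recurrence of u_n when q = p, and the one of v_n
   when q = -p; the initial values agree, so u_n and v_n are the coefficients
   of e^(pz) F and e^(-pz) F.  Both power series converge absolutely for
   |z| < 1 (the hypergeometric one by the ratio test), so Cauchy's product
   theorem identifies their sums with the products e^(+-pz) F(z). *)

Local Notation Re := complex.Re.
Local Notation Im := complex.Im.

Section Convolution.
Variable K : comPzRingType.
Implicit Types s t : K ^nat.

Definition seqconv s t n := \sum_(i < n.+1) s i * t (n - i)%N.

(* On coefficient sequences, [zderiv] and [zshift] are f |-> z f'(z) and
   f |-> z f(z). *)
Definition zderiv s n := n%:R * s n.
Definition zshift s n := if n is m.+1 then s m else 0.

Lemma zderiv_seqconv s t n :
  zderiv (seqconv s t) n = seqconv (zderiv s) t n + seqconv s (zderiv t) n.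
Proof.
rewrite /zderiv /seqconv mulr_sumr -big_split /=; apply: eq_bigr => i _.
have -> : n%:R = i%:R + (n - i)%:R :> K by rewrite -natrD subnKC // -ltnS.
ring.
Qed.

Lemma seqconv_zshiftl s t n : seqconv (zshift s) t n = zshift (seqconv s t) n.
Proof. by case: n => [|n]; rewrite /seqconv big_ord_recl /= mul0r add0r ?big_ord0. Qed.

Lemma seqconv_zshiftr s t n : seqconv s (zshift t) n = zshift (seqconv s t) n.
Proof.
case: n => [|n]; rewrite /seqconv big_ord_recr /=; first by rewrite big_ord0 mulr0 addr0.
rewrite subnn mulr0 addr0; apply: eq_bigr => i _ /=.
by rewrite subSn // -ltnS.
Qed.

Lemma seqconvDr s t1 t2 n :
  seqconv s (fun m => t1 m + t2 m) n = seqconv s t1 n + seqconv s t2 n.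
Proof. by rewrite /seqconv -big_split; apply: eq_bigr => i _; rewrite mulrDr. Qed.

Lemma seqconvZr s t x n : seqconv s (fun m => x * t m) n = x * seqconv s t n.
Proof. by rewrite /seqconv mulr_sumr; apply: eq_bigr => i _; rewrite mulrCA. Qed.

Lemma eq_seqconvr s t1 t2 : t1 =1 t2 -> seqconv s t1 =1 seqconv s t2.
Proof. by move=> e n; apply: eq_bigr => i _; rewrite e. Qed.

Lemma seqconv_mulX s t x n :
  seqconv (fun m => s m * x ^+ m) (fun m => t m * x ^+ m) n = seqconv s t n * x ^+ n.
Proof.
rewrite /seqconv mulr_suml; apply: eq_bigr => i _.
have -> : x ^+ n = x ^+ i * x ^+ (n - i) by rewrite -exprD subnKC // -ltnS.
ring.
Qed.

Lemma series_seqconv s t n :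
  series (seqconv s t) n = \sum_(0 <= i < n) s i * series t (n - i)%N.
Proof.
elim: n => [|n IH]; first by rewrite seriesEnat /= !big_geq.
rewrite seriesSr IH big_nat_recr //= subSnn.
have -> : series t 1 = t 0%N by rewrite seriesEord /= big_ord1.
rewrite /seqconv big_ord_recr /= subnn addrA; congr (_ + _).
rewrite !big_mkord -big_split; apply: eq_bigr => i _ /=.
by rewrite subSn 1?ltnW // seriesSr mulrDr.
Qed.

Lemma series_mul_sub_seqconv s t n :
  series s n * series t n - series (seqconv s t) n =
  \sum_(0 <= i < n) s i * \sum_((n - i)%N <= j < n) t j.
Proof.
rewrite series_seqconv seriesEnat /= mulr_suml -sumrB.
by apply: eq_bigr => i _; rewrite -mulrBr sub_series_geq ?leq_subr.
Qed.

End Convolution.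

Section ExponentialCoefficients.
Variable F : numFieldType.
Implicit Types (q : F) (s : nat -> F).

Definition cexp_coeff q n := q ^+ n / n`!%:R.

Lemma zderiv_cexp_coeff q n : zderiv (cexp_coeff q) n = q * zshift (cexp_coeff q) n.
Proof.
case: n => [|n]; rewrite /zderiv /cexp_coeff /= ?mul0r ?mulr0 //.
have fact_neq0 : n`!%:R != 0 :> F by rewrite pnatr_eq0 -lt0n fact_gt0.
by rewrite factS natrM exprS; field; rewrite fact_neq0 nat1r pnatr_eq0.
Qed.

(* e^(qz) (z g') = (z d/dz - q z) (e^(qz) g), since z (e^(qz))' = q z e^(qz). *)
Lemma seqconv_cexp_coeff_zderiv q s n :
  seqconv (cexp_coeff q) (zderiv s) n =
  zderiv (seqconv (cexp_coeff q) s) n - q * zshift (seqconv (cexp_coeff q) s) n.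
Proof.
rewrite zderiv_seqconv -seqconv_zshiftl.
have -> : seqconv (zderiv (cexp_coeff q)) s n = q * seqconv (zshift (cexp_coeff q)) s n.
  by rewrite /seqconv mulr_sumr; apply: eq_bigr => i _; rewrite zderiv_cexp_coeff mulrA.
by rewrite addrAC subrr add0r.
Qed.

End ExponentialCoefficients.

Lemma eq_seq_rec3 (T : Type) (s t : nat -> T) :
  s 0%N = t 0%N -> s 1%N = t 1%N -> s 2%N = t 2%N ->
  (forall k, s k = t k -> s k.+1 = t k.+1 -> s k.+2 = t k.+2 -> s k.+3 = t k.+3) ->
  s =1 t.
Proof.
move=> e0 e1 e2 eS n.
suff [] : [/\ s n = t n, s n.+1 = t n.+1 & s n.+2 = t n.+2] by [].
by elim: n => [|k [ek ek1 ek2]]; split; last exact: eS.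
Qed.

Section RecurrenceUnfolding.
Variable R : realType.
Variables a b c p : R[i].

Lemma useqS k : let N : R[i] := k.+2%:R in let D := (N + 1) * (c + N) in
  useq a b c p k.+3 =
      ((a + N) * (b + N) + p * (c + 2 * N)) / D * useq a b c p k.+2
      - p * (a + b + 2 * N + p - 1) / D * useq a b c p k.+1
      + p ^+ 2 / D * useq a b c p k.
Proof. by []. Qed.

Lemma vseqS k : let N : R[i] := k.+2%:R in let D := (N + 1) * (c + N) in
  vseq a b c p k.+3 =
      ((a + N) * (b + N) - p * (c + 2 * N)) / D * vseq a b c p k.+2
      + p * (a + b + 2 * N - p - 1) / D * vseq a b c p k.+1
      + p ^+ 2 / D * vseq a b c p k.
Proof. by []. Qed.

End RecurrenceUnfolding.

Section ComplexModulus.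
Variable R : realType.
Implicit Types (x y : R[i]) (r : R).

Lemma normr_normc x : `|x| = (normc x)%:C.
Proof. by []. Qed.

Lemma normc_ge0 x : 0 <= normc x.
Proof. by case: x => u v; apply: sqrtr_ge0. Qed.

Lemma normcX x n : normc (x ^+ n) = normc x ^+ n.
Proof. by apply: complexI; rewrite rmorphXn -!normr_normc normrX. Qed.

Lemma normc_nat n : normc (n%:R : R[i]) = n%:R.
Proof. by apply: complexI; rewrite -normr_normc normr_nat rmorph_nat. Qed.

Lemma normc_real r : normc r%:C = `|r|.
Proof. by rewrite /normc /= expr0n /= addr0 sqrtr_sqr. Qed.

Lemma normc_sum_le (I : Type) (s : seq I) (F : I -> R[i]) :
  normc (\sum_(i <- s) F i) <= \sum_(i <- s) normc (F i).
Proof. by rewrite -lecR -normr_normc rmorph_sum; apply: ler_norm_sum. Qed.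

Lemma Re_le_normc x : `|Re x| <= normc x.
Proof.
case: x => u v; rewrite /normc /= -sqrtr_sqr ler_sqrt ?lerDl ?sqr_ge0 //.
by rewrite addr_ge0 ?sqr_ge0.
Qed.

Lemma Im_le_normc x : `|Im x| <= normc x.
Proof.
case: x => u v; rewrite /normc /= -sqrtr_sqr ler_sqrt ?lerDr ?sqr_ge0 //.
by rewrite addr_ge0 ?sqr_ge0.
Qed.

Lemma normc_addn_le x n : normc (x + n%:R) <= n%:R + normc x.
Proof. by apply: le_trans (le_normcD _ _) _; rewrite normc_nat addrC. Qed.

Lemma normc_addn_ge x n : n%:R - normc x <= normc (x + n%:R).
Proof.
by rewrite lerBlDr; have := le_normcD (x + n%:R) (- x); rewrite normcN addrC addKr normc_nat.
Qed.

Lemma ltc_Re r x : 0 < x -> r < Re x -> r%:C < x.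
Proof. by case: x => u v; rewrite !ltcE /= => /andP[/eqP -> _] ->; rewrite eqxx. Qed.

Lemma cvg_real_complex (f : R ^nat) r :
  f @ \oo --> r -> (fun n => (f n)%:C) @ \oo --> r%:C.
Proof.
move=> /cvgrPdist_lt fr; apply/cvgrPdist_lt => e e_gt0.
have Re_gt0 : 0 < Re e by move: e_gt0; rewrite ltcE => /andP[].
apply: filterS (fr _ Re_gt0) => n fr_n.
by rewrite -rmorphB normr_normc normc_real; apply: ltc_Re.
Qed.

Lemma cvg0_normc_le (u : R[i] ^nat) (g : R ^nat) :
  (forall n, normc (u n) <= g n) -> g @ \oo --> 0 -> u @ \oo --> 0.
Proof.
move=> ug /cvgrPdist_lt g0; apply/cvgrPdist_lt => e e_gt0.
have Re_gt0 : 0 < Re e by move: e_gt0; rewrite ltcE => /andP[].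
apply: filterS (g0 _ Re_gt0) => n; rewrite !sub0r !normrN => gn.
rewrite normr_normc; apply: ltc_Re => //; exact: le_lt_trans (ug n) (le_lt_trans (ler_norm _) gn).
Qed.

Lemma series_normc_le_cvg (u : R[i] ^nat) (s : R ^nat) :
  (forall n, normc (u n) <= s n) -> cvgn (series s) -> cvgn (series u).
Proof.
move=> us cs; have s_ge0 n : 0 <= s n := le_trans (normc_ge0 (u n)) (us n).
have cvg_part (f : R[i] -> R) : (forall x, `|f x| <= normc x) ->
    cvgn (series (fun k => f (u k))).
  move=> f_le; apply: normed_cvg; apply: (series_le_cvg _ s_ge0) cs => n /=.
    exact: normr_ge0.
  exact: le_trans (f_le _) (us n).
have /cvg_real_complex cRe := cvg_part _ Re_le_normc.
have /cvg_real_complex cIm := cvg_part _ Im_le_normc.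
apply/cvg_ex; eexists; rewrite (_ : series u = fun n =>
    (series (fun k => Re (u k)) n)%:C + 'i * (series (fun k => Im (u k)) n)%:C).
  by apply: cvgD; [exact: cRe | apply: cvgM; [exact: cvg_cst | exact: cIm]].
apply/funext => n; rewrite /series /= !rmorph_sum mulr_sumr -big_split.
by apply: eq_bigr => k _; apply: complexE.
Qed.

End ComplexModulus.

Lemma series_ratio_cvg (R : realType) (w : R ^nat) (r : R) :
  (forall n, 0 <= w n) -> 0 < r -> r < 1 ->
  (\forall n \near \oo, w n.+1 <= r * w n) -> cvgn (series w).
Proof.
move=> w_ge0 r_gt0 r_lt1 [N _ wN].
have rX_gt0 n : 0 < r ^+ n by rewrite exprn_gt0.
pose K := \sum_(i < N.+1) w i / r ^+ i.
have le_K n : (n <= N)%N -> w n / r ^+ n <= K.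
  move=> le_nN; rewrite /K (bigD1 (Ordinal (le_nN : n < N.+1)%N)) //= lerDl.
  by apply: sumr_ge0 => i _; rewrite divr_ge0 // ltW.
have le_wN k : w (N + k)%N / r ^+ (N + k) <= w N / r ^+ N.
  elim: k => [|k IH]; first by rewrite addn0.
  apply: le_trans IH; rewrite addnS exprS.
  apply: (@le_trans _ _ (r * w (N + k)%N / (r * r ^+ (N + k)))).
    by rewrite ler_pM2r ?invr_gt0 ?mulr_gt0 //; apply: wN; rewrite /= leq_addr.
  by rewrite invfM mulrACA divff ?mul1r ?gt_eqF.
have w_le n : w n <= K * r ^+ n.
  rewrite -ler_pdivrMr //; have [/le_K //|/ltnW le_Nn] := leqP n N.
  by rewrite -(subnKC le_Nn); apply: le_trans (le_wN _) (le_K _ (leqnn N)).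
apply: (series_le_cvg w_ge0 _ w_le) => [n|].
  apply: mulr_ge0; last exact/ltW.
  by apply: sumr_ge0 => i _; rewrite divr_ge0 // ltW.
by apply: is_cvg_geometric_series; rewrite ger0_norm // ltW.
Qed.

Lemma series_seqconv_ge_half (R : realFieldType) (u v : R ^nat) n :
  (forall i, 0 <= u i) -> (forall i, 0 <= v i) ->
  series u (n %/ 2)%N * series v (n %/ 2)%N <= series (seqconv u v) n.
Proof.
move=> u_ge0 v_ge0; set m := (n %/ 2)%N.
have le_mmn : (m + m <= n)%N by rewrite addnn -muln2 leq_trunc_div.
have series_le k l : (k <= l)%N -> series v k <= series v l.
  by move=> le_kl; rewrite !seriesEnat; apply: nondecreasing_series.
rewrite series_seqconv seriesEnat /= mulr_suml.
rewrite [leRHS](@big_cat_nat _ _ _ m 0 n) //= ?(leq_trans (leq_addr _ _) le_mmn) //.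
rewrite -[leLHS]addr0 lerD ?sumr_ge0 // => [|i _]; last first.
  by rewrite mulr_ge0 // seriesEnat sumr_ge0.
rewrite big_nat_cond [leRHS]big_nat_cond; apply: ler_sum => i /andP[/andP[_ lt_im] _].
rewrite ler_wpM2l // series_le // leq_subRL; last first.
  by rewrite (leq_trans (ltnW lt_im)) // (leq_trans (leq_addr _ _) le_mmn).
by rewrite (leq_trans _ le_mmn) // leq_add2r ltnW.
Qed.

Section CauchyProduct.
Variable R : realType.
Implicit Types u v : R[i] ^nat.

Lemma normc_series_mul_sub_seqconv u v n :
  normc (series u n * series v n - series (seqconv u v) n) <=
  series (fun k => normc (u k)) n * series (fun k => normc (v k)) n -
  series (seqconv (fun k => normc (u k)) (fun k => normc (v k))) n.
Proof.
rewrite !series_mul_sub_seqconv; apply: le_trans; first exact: normc_sum_le.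
apply: ler_sum => i _; rewrite normcM ler_wpM2l ?normc_ge0 //.
exact: normc_sum_le.
Qed.

(* The error term of the product of partial sums is dominated by the same
   error term for |u| and |v|, which [series_seqconv_ge_half] bounds by
   U_n V_n - U_(n/2) V_(n/2) for the partial sums U, V of |u|, |v|; this
   tends to 0. *)
Lemma cvg_series_seqconv u v :
  cvgn (series (fun k => normc (u k))) -> cvgn (series (fun k => normc (v k))) ->
  series (seqconv u v) @ \oo --> limn (series u) * limn (series v).
Proof.
move=> cu cv.
have cvg_abs (w : R[i] ^nat) :
    cvgn (series (fun k => normc (w k))) -> series w @ \oo --> limn (series w).
  exact: series_normc_le_cvg (fun n => lexx _).
pose U := series (fun k => normc (u k)); pose V := series (fun k => normc (v k)).
have err0 : (fun n => series u n * series v n - series (seqconv u v) n) @ \oo --> 0.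
  apply: (@cvg0_normc_le _ _ (fun n => U n * V n - U (n %/ 2)%N * V (n %/ 2)%N)).
    move=> n; apply: le_trans (normc_series_mul_sub_seqconv _ _ _) _.
    by rewrite lerD2l lerN2; apply: series_seqconv_ge_half => i; apply: normc_ge0.
  have cUV : (fun n => U n * V n) @ \oo --> limn U * limn V by apply: cvgM.
  rewrite -(subrr (limn U * limn V)); apply: cvgB => //.
  exact: (cvg_comp _ _ (@cvg_divnr 2 isT) cUV).
have cuv : (fun n => series u n * series v n) @ \oo --> limn (series u) * limn (series v).
  by apply: cvgM; apply: cvg_abs.
have -> : series (seqconv u v) = (fun n => series u n * series v n) -
    (fun n => series u n * series v n - series (seqconv u v) n).
  by apply/funext => n /=; rewrite opprB addrC subrK.
by rewrite -[X in _ --> X]subr0; apply: cvgB; [exact: cuv | exact: err0].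
Qed.

End CauchyProduct.

Lemma near_quadratic_le (R : realType) (rho r al be ga : R) :
  0 <= rho -> rho < r -> 0 <= al -> 0 <= be -> 0 <= ga ->
  \forall n \near \oo,
    rho * ((n%:R + al) * (n%:R + be)) <= r * (n.+1%:R * (n%:R - ga)).
Proof.
move=> rho_ge0 rho_lt_r al_ge0 be_ge0 ga_ge0.
pose d := r - rho; pose c0 := r * ga + rho * (al * be).
pose M := r * ga + rho * (al + be) + c0.
have d_gt0 : 0 < d by rewrite /d subr_gt0.
have c0_ge0 : 0 <= c0 by rewrite /c0 addr_ge0 ?mulr_ge0 //; lra.
have M_ge0 : 0 <= M by rewrite /M !addr_ge0 ?mulr_ge0 //; lra.
near=> n.
have n_ge : M / d + 1 <= n%:R by near: n; apply: nbhs_infty_ger.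
have n_ge1 : 1 <= n%:R :> R by apply: le_trans n_ge; rewrite lerDr divr_ge0 // ltW.
have dn_ge : M <= d * n%:R.
  by rewrite mulrC -ler_pdivrMr //; apply: le_trans n_ge; rewrite lerDl.
(* r (n + 1) (n - ga) - rho (n + al) (n + be)
     = n (d n - M) + (n - 1) c0 + r n *)
have dn_sub_M : 0 <= n%:R * (d * n%:R - M) by rewrite mulr_ge0 ?subr_ge0 //; lra.
have n1_c0 : 0 <= (n%:R - 1) * c0 by rewrite mulr_ge0 // subr_ge0.
have rn_ge0 : 0 <= r * n%:R by rewrite mulr_ge0 //; lra.
rewrite -natr1; rewrite /M /c0 /d in dn_sub_M n1_c0; nra.
Unshelve. all: by end_near.
Qed.

Lemma cexp_coeff_abs_cvg (R : realType) (w : R[i]) :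
  cvgn (series (fun n => normc (cexp_coeff w n))).
Proof.
rewrite (_ : (fun n => _) = exp_coeff (normc w)); first exact: is_cvg_series_exp_coeff.
by apply/funext => n; rewrite /cexp_coeff /exp_coeff /= normcM normcX normcV normc_nat.
Qed.

Section Hypergeometric.
Variable R : realType.
Local Notation C := R[i].
Variables a b c : C.
Hypothesis c_neq_Nnat : forall k : nat, c != - k%:R.

Local Notation h := (hyp_coef a b c).

Lemma pochS (x : C) n : poch x n.+1 = poch x n * (x + n%:R).
Proof. by rewrite /poch big_ord_recr. Qed.

Lemma addc_nat_neq0 k : c + k%:R != 0.
Proof. by rewrite addr_eq0. Qed.

Lemma poch_neq0 n : poch c n != 0.
Proof. by apply/prodf_neq0 => i _; apply: addc_nat_neq0. Qed.

Lemma hyp_coefS n :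
  n.+1%:R * (c + n%:R) * h n.+1 = (a + n%:R) * (b + n%:R) * h n.
Proof.
have fact_neq0 : n`!%:R != 0 :> C by rewrite pnatr_eq0 -lt0n fact_gt0.
rewrite /hyp_coef !pochS factS natrM; field.
by rewrite fact_neq0 poch_neq0 addc_nat_neq0 nat1r pnatr_eq0.
Qed.

(* The hypergeometric equation theta (theta + c - 1) F = z (theta + a) (theta + b) F. *)
Lemma hyp_coef_ode n :
  zderiv (zderiv h) n + (c - 1) * zderiv h n =
  zshift (fun j => zderiv (zderiv h) j + (a + b) * zderiv h j + a * b * h j) n.
Proof.
case: n => [|n]; rewrite /zderiv /= ?mul0r ?mulr0 ?addr0 //.
have := hyp_coefS n; rewrite -natr1 => hS.
transitivity ((n%:R + 1) * (c + n%:R) * h n.+1); first ring.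
by rewrite hS; ring.
Qed.

Definition exp_hyp_coef (q : C) := seqconv (cexp_coeff q) h.

Lemma exp_hyp_coef_rec q k : let N : C := k.+2%:R in
  (N + 1) * (c + N) * exp_hyp_coef q k.+3 =
  ((a + N) * (b + N) + q * (c + 2 * N)) * exp_hyp_coef q k.+2
  - q * (a + b + 2 * N + q - 1) * exp_hyp_coef q k.+1 + q ^+ 2 * exp_hyp_coef q k.
Proof.
have := @eq_seqconvr _ (cexp_coeff q) _ _ hyp_coef_ode k.+3.
rewrite seqconv_zshiftr /= !seqconvDr !seqconvZr !seqconv_cexp_coeff_zderiv /zderiv /zshift /=.
rewrite !seqconv_cexp_coeff_zderiv /zderiv /zshift /= -/(exp_hyp_coef q) -!nat1r => ode.
move/eqP: ode; rewrite -subr_eq0 => /eqP ode.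
by apply/eqP; rewrite -subr_eq0 -ode; apply/eqP; ring.
Qed.

Lemma useq_exp_hyp_coef p : useq a b c p =1 exp_hyp_coef p.
Proof.
have c_neq0 : c != 0 by have := addc_nat_neq0 0; rewrite addr0.
have c1_neq0 : c + 1 != 0 := addc_nat_neq0 1.
apply: eq_seq_rec3.
1-3: rewrite /exp_hyp_coef /seqconv /cexp_coeff /hyp_coef /poch !big_ord_recr !big_ord0.
1-3: by rewrite /= !subnE ?factS fact0 ?natrM /=; field; rewrite ?c_neq0 ?c1_neq0.
move=> k e0 e1 e2; rewrite useqS e0 e1 e2 /=.
have := exp_hyp_coef_rec p k; rewrite /=; set N : C := k.+2%:R => rec.
have N1_neq0 : N + 1 != 0 by rewrite /N natr1 pnatr_eq0.
have cN_neq0 : c + N != 0 := addc_nat_neq0 k.+2.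
apply: (mulfI (mulf_neq0 N1_neq0 cN_neq0)); rewrite rec; clearbody N.
by field; rewrite cN_neq0 N1_neq0.
Qed.

Lemma vseq_useqN p : vseq a b c p =1 useq a b c (- p).
Proof.
apply: eq_seq_rec3; [by []|by rewrite /=; ring|by rewrite /= sqrrN; ring|].
by move=> k e0 e1 e2; rewrite vseqS useqS e0 e1 e2 /= sqrrN; ring.
Qed.

Lemma normc_hyp_coefS_le (rho r : R) n : 0 <= rho -> 0 <= r ->
  rho * ((n%:R + normc a) * (n%:R + normc b)) <= r * (n.+1%:R * (n%:R - normc c)) ->
  rho * normc (h n.+1) <= r * normc (h n).
Proof.
move=> rho_ge0 r_ge0 quad; set D := n.+1%:R * normc (c + n%:R).
have D_gt0 : 0 < D.
  rewrite mulr_gt0 // lt_def normc_ge0 andbT.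
  exact: contra_neq (@eq0_normc _ _) (addc_nat_neq0 n).
have rec : D * normc (h n.+1) = normc (a + n%:R) * normc (b + n%:R) * normc (h n).
  by rewrite /D -normc_nat -!normcM hyp_coefS.
rewrite -(ler_pM2l D_gt0) mulrCA rec mulrA.
apply: le_trans (_ : rho * ((n%:R + normc a) * (n%:R + normc b)) * normc (h n) <= _).
  by rewrite ler_wpM2r ?normc_ge0 // ler_wpM2l // ler_pM ?normc_ge0 ?normc_addn_le.
apply: le_trans (ler_wpM2r (normc_ge0 _) quad) _.
rewrite [leRHS](_ : _ = r * D * normc (h n)); last by ring.
by rewrite ler_wpM2r ?normc_ge0 // ler_wpM2l // ler_wpM2l // normc_addn_ge.
Qed.

Lemma hyp_series_abs_cvg z : normc z < 1 ->
  cvgn (series (fun n => normc (h n * z ^+ n))).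
Proof.
move=> rho_lt1; set rho := normc z in rho_lt1 *; pose r := (1 + rho) / 2.
have rho_ge0 : 0 <= rho := normc_ge0 z.
have rho_lt_r : rho < r by rewrite /r; lra.
apply: (@series_ratio_cvg _ _ r) => [n|||]; [exact: normc_ge0|rewrite /r; lra|rewrite /r; lra|].
have := near_quadratic_le rho_ge0 rho_lt_r (normc_ge0 a) (normc_ge0 b) (normc_ge0 c).
apply: filterS => n quad; rewrite !(normcM (h _)) !normcX exprS -/rho.
rewrite [leLHS]mulrCA [leLHS]mulrA [leRHS]mulrA ler_wpM2r ?exprn_ge0 //.
by apply: normc_hyp_coefS_le quad => //; rewrite /r; lra.
Qed.

Lemma exp_hyp_series_cvg (q z : C) : normc z < 1 ->
  series (fun n => exp_hyp_coef q n * z ^+ n) @ \oo -->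
    cexp (q * z) * hypF a b c z.
Proof.
move=> z_lt1.
rewrite (_ : (fun n => _) = seqconv (cexp_coeff (q * z)) (fun n => h n * z ^+ n)).
  apply: cvg_series_seqconv; first exact: cexp_coeff_abs_cvg.
  exact: hyp_series_abs_cvg.
apply/funext => n; rewrite -seqconv_mulX; apply: eq_bigr => i _.
by rewrite /cexp_coeff exprMn; ring.
Qed.

End Hypergeometric.

Theorem theorem3p2 (R : realType) (a b c p : R[i])
  (hc : forall k : nat, c != - (k%:R)) (z : R[i]) (hz : `|z| < 1) :
  series (fun n => (useq a b c p n - vseq a b c p n) / 2 * z ^+ n) @ \oo -->
    csinh (p * z) * hypF a b c z.
Proof.
have z_lt1 : normc z < 1 by rewrite -ltcR -normr_normc.
pose E q n := exp_hyp_coef a b c q n * z ^+ n.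
have -> : (fun n => (useq a b c p n - vseq a b c p n) / 2 * z ^+ n) =
    2^-1 *: (E p - E (- p)).
  apply/funext => n; rewrite !fctE -[2^-1 *: _]/(2^-1 * _) /E.
  by rewrite vseq_useqN !useq_exp_hyp_coef //; ring.
rewrite seriesZ seriesD seriesN.
have -> : csinh (p * z) * hypF a b c z =
    2^-1 *: (cexp (p * z) * hypF a b c z - cexp (- p * z) * hypF a b c z).
  by rewrite /csinh mulNr -[2^-1 *: _]/(2^-1 * _); ring.
apply: cvgZl_tmp; apply: cvgB; exact: exp_hyp_series_cvg.
Qed.
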